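(* Let $h$ be the height function of a single-species TASEP with arbitrary initial condition, and let $x(\cdot)$ be a backwards path with respect to $h$ started at some time $t$. Let $t_1<t_2$ in $[0,t]$ and $x_1,x_2\in\mathbb{Z}$, and suppose $x(t_1)\ge x_1$ and $x(t_2)\ge x_2$. Let $x^{\mathrm{step},l}(\tau)$, $\tau\in[t_1,t_2]$, be the leftmost backwards path with respect to $h^{\mathrm{step}}_{x_1,t_1}$ starting at time $t_2$ from position $x_2$, all processes being coupled by basic coupling. Then $x(\tau)\ge x^{\mathrm{step},l}(\tau)$ for all $\tau\in[t_1,t_2]$.
   Context: Single-species TASEP (graphical construction): independent rate-one Poisson processes $\mathcal{P}_z$, $z\in\mathbb{Z}$; at each ring of $\mathcal{P}_z$ (a jump attempt at site $z$) a particle at $z$, if any, jumps to $z+1$ if $z+1$ is empty. Basic coupling: several TASEPs are constructed with the same Poisson processes. A height function $h(j,s)$ of a TASEP satisfies $h(j,s)-h(j-1,s)=1-2\eta_s(j)$ ($\eta_s(j)=1$ iff a particle is at $j$), and each jump of a particle from $j$ to $j+1$ at time $s$ increases $h(j,\cdot)$ by $2$ and leaves all other values unchanged. For $y\in\mathbb{Z}$, $\tau\ge0$, $h^{\mathrm{step}}_{y,\tau}$ denotes the height function of the TASEP started at time $\tau$ from particles on all sites $\le y$ and holes on all sites $>y$, normalised by $h^{\mathrm{step}}_{y,\tau}(j,\tau)=|j-y|$. Backwards path with respect to a height function $h$, started at time $t$ from $x(t)=x$: a piecewise constant path defined going backwards in time; it changes only at times $s$ at which there is a jump attempt at site $x(s)$.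 At such a time: if a jump occurred, i.e. $h(x(s),s)=h(x(s),s^-)+2$, set $x(s^-)=x(s)$; otherwise choose $x(s^-)\in\{x(s)-1,x(s)+1\}$ such that $h(x(s^-),s)=h(x(s),s)-1$. The rightmost (resp. leftmost) backwards path always chooses $x(s)+1$ (resp. $x(s)-1$) when this choice is allowed. *)

From Stdlib Require Import Reals ZArith List.
Open Scope R_scope.

(* Clocks: [P z s] means the Poisson process P_z has a point (a jump attempt
   at site z) at time s.  The statement is pathwise; we assume the almost-sure
   regularity properties of independent rate-one Poisson processes. *)
Definition clocks := Z -> R -> Prop.

Definition clock_regular (P : clocks) : Prop :=
  (forall (z : Z) (a b : R), exists l : list R,
      forall s, a <= s <= b -> P z s -> In s l) /\
  (forall (z z' : Z) (s : R), P z s -> P z' s -> z = z') /\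
  (* on every bounded time window there are arbitrarily far quiet sites on
     both sides (a.s. true; guarantees well-posedness of the construction) *)
  (forall (T : R) (N : Z), exists z1 z2 : Z,
      (z1 <= - N)%Z /\ (N <= z2)%Z /\
      (forall s, 0 <= s <= T -> ~ P z1 s /\ ~ P z2 s)).

(* [LL f s v]: the left limit f(s^-) exists and equals v (f is constant on a
   left neighbourhood of s). *)
Definition LL (f : R -> Z) (s : R) (v : Z) : Prop :=
  exists eps, 0 < eps /\ forall u, s - eps < u < s -> f u = v.

Definition RC (f : R -> Z) (s : R) : Prop :=
  exists eps, 0 < eps /\ forall u, s <= u < s + eps -> f u = f s.

(* [tasep_height P tau0 h]: h(j,s) (for s >= tau0) is the height function of a
   TASEP started at time tau0 and driven by the clocks P (graphical
   construction): h(j,s) - h(j-1,s) = 1 - 2 eta_s(j) with eta in {0,1};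
   h(j,.) is piecewise constant, right-continuous, and at a ring of P_j at
   time s > tau0 it increases by 2 iff the particle at j jumps to j+1
   (eta_{s-}(j) = 1, eta_{s-}(j+1) = 0); otherwise it does not change. *)
Definition tasep_height (P : clocks) (tau0 : R) (h : Z -> R -> Z) : Prop :=
  (forall (j : Z) (s : R), tau0 <= s ->
      (h j s - h (j - 1)%Z s = 1 \/ h j s - h (j - 1)%Z s = -1)%Z) /\
  (forall (j : Z) (s : R), tau0 <= s -> RC (h j) s) /\
  (forall (j : Z) (s : R), tau0 < s ->
      exists a b c : Z,
        LL (h (j - 1)%Z) s a /\ LL (h j) s b /\ LL (h (j + 1)%Z) s c /\
        ((P j s /\ (b - a = -1)%Z /\ (c - b = 1)%Z /\ h j s = (b + 2)%Z) \/
         (~ (P j s /\ (b - a = -1)%Z /\ (c - b = 1)%Z) /\ h j s = b))).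

Definition jump_at (h : Z -> R -> Z) (j : Z) (s : R) : Prop :=
  exists v, LL (h j) s v /\ h j s = (v + 2)%Z.

(* one backward step: y = x(s), ym = x(s^-) *)
Definition bstep_ok (P : clocks) (h : Z -> R -> Z) (s : R) (y ym : Z) : Prop :=
  (~ P y s -> ym = y) /\
  (P y s -> jump_at h y s -> ym = y) /\
  (P y s -> ~ jump_at h y s ->
     (ym = (y - 1)%Z \/ ym = (y + 1)%Z) /\ h ym s = (h y s - 1)%Z).

Definition backwards_path (P : clocks) (h : Z -> R -> Z) (tau0 t : R)
    (x : R -> Z) : Prop :=
  (forall s, tau0 <= s < t -> RC x s) /\
  (forall s, tau0 < s <= t -> exists ym, LL x s ym /\ bstep_ok P h s (x s) ym).

Definition leftmost_backwards_path (P : clocks) (h : Z -> R -> Z) (tau0 t : R)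
    (x : R -> Z) : Prop :=
  backwards_path P h tau0 t x /\
  (forall s ym, tau0 < s <= t -> LL x s ym -> P (x s) s ->
     ~ jump_at h (x s) s -> h (x s - 1)%Z s = (h (x s) s - 1)%Z ->
     ym = (x s - 1)%Z).

Definition step_height_at (P : clocks) (y : Z) (tau : R) (h : Z -> R -> Z) : Prop :=
  tasep_height P tau h /\ (forall j : Z, h j tau = Z.abs (j - y)).

(* Write D = h - h^step, both heights being driven by the same clocks.  At a
   ring, D does not decrease along a backwards path of h and does not increase
   along a backwards path of h^step, because only one site rings at a time and
   all slopes are +-1.  Hence, while x lies strictly left of x^{step,l}, the gap
   D(x^{step,l}) - D(x) stays <= 0: at time t1 because |j - x1| is the steepest
   profile to the right of x1, and it cannot turn positive when the paths cross.
   If the paths met again after being strictly ordered, the ring at the meeting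
   time, where the leftmost path steps left whenever allowed, would force the
   gap just before it to be positive.  So x < x^{step,l} would persist up to t2,
   contradicting x(t2) >= x2 = x^{step,l}(t2). *)

From Stdlib Require Import Reals ZArith Lra Lia Classical IndefiniteDescription.
Open Scope R_scope.

Definition near_left (s : R) (Q : R -> Prop) : Prop :=
  exists eps, 0 < eps /\ forall u, s - eps < u < s -> Q u.

Definition near_right (s : R) (Q : R -> Prop) : Prop :=
  exists eps, 0 < eps /\ forall u, s <= u < s + eps -> Q u.

Lemma near_left_and s (Q1 Q2 : R -> Prop) :
  near_left s Q1 -> near_left s Q2 -> near_left s (fun u => Q1 u /\ Q2 u).
Proof.
  intros [e1 [He1 H1]] [e2 [He2 H2]]. exists (Rmin e1 e2).
  split; [now apply Rmin_pos|].
  intros u Hu. pose proof (Rmin_l e1 e2). pose proof (Rmin_r e1 e2).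
  split; [apply H1 | apply H2]; lra.
Qed.

Lemma near_right_and s (Q1 Q2 : R -> Prop) :
  near_right s Q1 -> near_right s Q2 -> near_right s (fun u => Q1 u /\ Q2 u).
Proof.
  intros [e1 [He1 H1]] [e2 [He2 H2]]. exists (Rmin e1 e2).
  split; [now apply Rmin_pos|].
  intros u Hu. pose proof (Rmin_l e1 e2). pose proof (Rmin_r e1 e2).
  split; [apply H1 | apply H2]; lra.
Qed.

Lemma near_left_impl s (Q1 Q2 : R -> Prop) :
  (forall u, Q1 u -> Q2 u) -> near_left s Q1 -> near_left s Q2.
Proof. intros H12 [e [He H]]. exists e. split; auto. Qed.

Lemma near_right_impl s (Q1 Q2 : R -> Prop) :
  (forall u, Q1 u -> Q2 u) -> near_right s Q1 -> near_right s Q2.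
Proof. intros H12 [e [He H]]. exists e. split; auto. Qed.

Lemma near_left_witness s (Q : R -> Prop) lo :
  lo < s -> near_left s Q -> exists u, lo <= u < s /\ Q u.
Proof.
  intros Hlo [e [He H]].
  destruct (Rle_dec lo (s - e / 2)) as [Hle | Hgt].
  - exists (s - e / 2). split; [lra | apply H; lra].
  - exists lo. split; [lra | apply H; lra].
Qed.

Lemma LL_unique f s v w : LL f s v -> LL f s w -> v = w.
Proof.
  intros Hv Hw.
  destruct (near_left_witness s _ (s - 1) ltac:(lra) (near_left_and _ _ _ Hv Hw))
    as [u [_ [Eu Eu']]].
  congruence.
Qed.

Lemma real_induction (a b : R) (Q : R -> Prop) :
  a <= b -> Q a ->
  (forall c, a <= c < b -> Q c -> near_right c Q) ->
  (forall c, a < c <= b -> (forall u, a <= u < c -> Q u) -> Q c) ->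
  forall u, a <= u <= b -> Q u.
Proof.
  intros Hab Qa Hright Hleft.
  set (S := fun u => a <= u <= b /\ forall v, a <= v <= u -> Q v).
  assert (Sa : S a).
  { split; [lra|]. intros v Hv. replace v with a by lra. exact Qa. }
  destruct (completeness S) as [m [Hub Hlub]].
  { exists b. intros u [Hu _]. lra. }
  { exists a. exact Sa. }
  assert (Ham : a <= m) by (apply Hub; exact Sa).
  assert (Hmb : m <= b) by (apply Hlub; intros u [Hu _]; lra).
  (* every point below the supremum lies below some element of [S] *)
  assert (Qbelow : forall v, a <= v < m -> Q v).
  { intros v Hv. apply NNPP. intros Nv.
    assert (m <= v); [|lra].
    apply Hlub. intros w [Hw Qw]. destruct (Rle_or_lt w v) as [|Hvw]; [lra|].
    exfalso. apply Nv, Qw. lra. }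
  assert (Qm : forall v, a <= v <= m -> Q v).
  { intros v Hv. destruct (Rlt_or_le v m) as [|Hmv]; [apply Qbelow; lra|].
    replace v with m by lra.
    destruct (Rle_lt_or_eq_dec a m Ham) as [Hlt | <-]; [apply Hleft; auto; lra | exact Qa]. }
  destruct (Rle_lt_or_eq_dec m b Hmb) as [Hlt | <-]; [|exact Qm].
  exfalso.
  destruct (Hright m (conj Ham Hlt) (Qm m (conj Ham (Rle_refl m)))) as [e [He Hq]].
  set (w := Rmin (m + e / 2) b).
  assert (Hmw : m < w) by (apply Rmin_glb_lt; lra).
  assert (Hw : w <= m + e / 2 /\ w <= b) by (split; [apply Rmin_l | apply Rmin_r]).
  assert (Sw : S w).
  { split; [lra|]. intros v Hv.
    destruct (Rle_or_lt v m); [apply Qm | apply Hq]; lra. }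
  pose proof (Hub w Sw). lra.
Qed.

Open Scope Z_scope.

(* [Hm] and [H] are the height profiles just before and at a time [c], and [p]
   is the set of sites whose clock rings at [c]. *)
Record tasep_update (p : Z -> Prop) (Hm H : Z -> Z) : Prop := {
  update_values : forall j, H j = Hm j \/ H j = Hm j + 2;
  update_jump : forall j, H j = Hm j + 2 ->
    p j /\ Hm (j - 1) = Hm j + 1 /\ Hm (j + 1) = Hm j + 1;
  update_quiet : forall j, ~ p j -> H j = Hm j;
  update_slope : forall j, H (j + 1) = H j + 1 \/ H (j + 1) = H j - 1 }.

Definition backward_step (p : Z -> Prop) (Hm H : Z -> Z) (y ym : Z) : Prop :=
  (~ p y -> ym = y) /\
  (p y -> H y = Hm y + 2 -> ym = y) /\
  (p y -> H y <> Hm y + 2 -> (ym = y - 1 \/ ym = y + 1) /\ H ym = H y - 1).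

Definition leftmost_choice (p : Z -> Prop) (Hm H : Z -> Z) (y ym : Z) : Prop :=
  p y -> H y <> Hm y + 2 -> H (y - 1) = H y - 1 -> ym = y - 1.

Lemma update_neighbor p Hm H j k : tasep_update p Hm H ->
  k = j - 1 \/ k = j + 1 -> H k = H j + 1 \/ H k = H j - 1.
Proof.
  intros U [-> | ->].
  - pose proof (update_slope _ _ _ U (j - 1)) as S.
    replace (j - 1 + 1) with j in S by ring. lia.
  - exact (update_slope _ _ _ U j).
Qed.

Lemma backward_step_cases p Hm H y ym :
  tasep_update p Hm H -> backward_step p Hm H y ym ->
  (~ p y /\ ym = y) \/ (p y /\ H y = Hm y + 2 /\ ym = y) \/
  (p y /\ H y = Hm y /\ (ym = y - 1 \/ ym = y + 1) /\ H ym = H y - 1).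
Proof.
  intros U [stay [jump move]].
  destruct (classic (p y)) as [py | npy]; [|left; auto].
  destruct (Z.eq_dec (H y) (Hm y + 2)) as [e | ne]; [right; left; auto|].
  right; right. destruct (move py ne) as [Hym Hh].
  destruct (update_values _ _ _ U y); [auto | contradiction].
Qed.

Section LocalComparison.

Variables (p : Z -> Prop) (Hm H Km K : Z -> Z).
Hypothesis single_ring : forall j k, p j -> p k -> j = k.
Hypothesis HU : tasep_update p Hm H.
Hypothesis KU : tasep_update p Km K.

Lemma neighbor_quiet y k : p y -> k = y - 1 \/ k = y + 1 -> ~ p k.
Proof. intros py Hk pk. specialize (single_ring _ _ pk py). lia. Qed.

Lemma backward_step_diff_mono y ym :
  backward_step p Hm H y ym -> Hm ym - Km ym <= H y - K y.
Proof.
  intro B.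
  destruct (backward_step_cases _ _ _ _ _ HU B)
    as [[npy ->] | [[py [Hj ->]] | [py [_ [Hym Hh]]]]].
  - rewrite (update_quiet _ _ _ HU _ npy), (update_quiet _ _ _ KU _ npy). lia.
  - destruct (update_values _ _ _ KU y); lia.
  - pose proof (neighbor_quiet _ _ py Hym) as q.
    rewrite <- (update_quiet _ _ _ HU _ q), <- (update_quiet _ _ _ KU _ q).
    destruct (update_neighbor _ _ _ _ _ KU Hym); lia.
Qed.

Lemma backward_steps_cross_forward y ym z zm :
  backward_step p Hm H y ym -> backward_step p Km K z zm ->
  y < z -> zm <= ym -> H z - K z <= H y - K y.
Proof.
  intros By Bz Hyz Hzy.
  destruct (backward_step_cases _ _ _ _ _ HU By)
    as [[npy ->] | [[py [_ ->]] | [py [_ [Hym Hh]]]]];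
  destruct (backward_step_cases _ _ _ _ _ KU Bz)
    as [[npz ->] | [[pz [_ ->]] | [pz [_ [Hzm Hk]]]]];
  try lia; try (pose proof (single_ring _ _ py pz); lia).
  - assert (zm = y /\ z = y + 1) as [-> ->] by lia.
    destruct (update_neighbor _ _ _ y _ HU (or_intror eq_refl)); lia.
  - assert (ym = z /\ z = y + 1) as [-> ->] by lia.
    destruct (update_neighbor _ _ _ y _ KU (or_intror eq_refl)); lia.
Qed.

Lemma backward_steps_cross_backward y ym z zm :
  backward_step p Hm H y ym -> backward_step p Km K z zm ->
  leftmost_choice p Km K z zm ->
  z <= y -> ym < zm -> Hm ym - Km ym < Hm zm - Km zm.
Proof.
  intros By Bz Lz Hzy Hyz.
  destruct (backward_step_cases _ _ _ _ _ HU By)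
    as [[npy ->] | [[py [Hj ->]] | [py [Hs [Hym Hh]]]]];
  destruct (backward_step_cases _ _ _ _ _ KU Bz)
    as [[npz ->] | [[pz [Kj ->]] | [pz [Ks [Hzm Hk]]]]];
  try lia; try (pose proof (single_ring _ _ py pz); subst z).
  - assert (z = y) by lia. subst z. contradiction.
  - assert (zm = y + 1) by lia. subst zm.
    destruct (update_jump _ _ _ HU y Hj) as [_ [_ Hright]].
    pose proof (update_quiet _ _ _ KU (y + 1) (neighbor_quiet _ _ py (or_intror eq_refl))).
    lia.
  - assert (z = y) by lia. subst z. contradiction.
  - assert (ym = y - 1) by lia. subst ym.
    destruct (update_jump _ _ _ KU y Kj) as [_ [Kleft _]].
    pose proof (update_quiet _ _ _ HU (y - 1) (neighbor_quiet _ _ py (or_introl eq_refl))).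
    lia.
  - assert (ym = y - 1 /\ zm = y + 1) as [-> ->] by lia.
    (* the leftmost path did not step left, so stepping left was not allowed *)
    assert (Kleft : K (y - 1) = K y + 1).
    { destruct (update_neighbor _ _ _ y _ KU (or_introl eq_refl)) as [| Kl]; [assumption|].
      specialize (Lz pz ltac:(lia) Kl). lia. }
    pose proof (update_neighbor _ _ _ y _ HU (or_intror eq_refl)).
    pose proof (neighbor_quiet _ _ py (or_introl eq_refl)).
    pose proof (neighbor_quiet _ _ py (or_intror eq_refl)).
    rewrite <- (update_quiet _ _ _ HU (y - 1)), <- (update_quiet _ _ _ KU (y - 1)),
      <- (update_quiet _ _ _ HU (y + 1)), <- (update_quiet _ _ _ KU (y + 1)) by auto.
    lia.
Qed.

End LocalComparison.

Lemma Z_increment_bound (f : Z -> Z) a b :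
  (forall j, f (j + 1) <= f j + 1) -> a <= b -> f b <= f a + (b - a).
Proof.
  intros Hf Hab.
  replace b with (a + (b - a)) at 1 by ring.
  pattern (b - a). apply natlike_ind; [rewrite Z.add_0_r; lia | | lia].
  intros d Hd IH. specialize (Hf (a + d)).
  rewrite <- Z.add_1_r, Z.add_assoc. lia.
Qed.

Lemma step_profile_gap_nonincreasing (f : Z -> Z) y a b :
  (forall j, f (j + 1) <= f j + 1) -> y <= a <= b ->
  f b - Z.abs (b - y) <= f a - Z.abs (a - y).
Proof.
  intros Hf Hab. pose proof (Z_increment_bound f a b Hf ltac:(lia)).
  rewrite !Z.abs_eq by lia. lia.
Qed.

Close Scope Z_scope.

Lemma tasep_height_slope P t0 h j s : tasep_height P t0 h -> t0 <= s ->
  (h (j + 1) s = h j s + 1 \/ h (j + 1) s = h j s - 1)%Z.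
Proof.
  intros [T1 _] Hs. specialize (T1 (j + 1)%Z s Hs).
  replace (j + 1 - 1)%Z with j in T1 by ring. lia.
Qed.

Lemma tasep_height_later P t0 t1 h :
  t0 <= t1 -> tasep_height P t0 h -> tasep_height P t1 h.
Proof.
  intros Ht [T1 [T2 T3]].
  split; [|split]; intros j s Hs; [apply T1 | apply T2 | apply T3]; lra.
Qed.

Lemma backwards_path_restrict P h t0 t x t1 t2 :
  t0 <= t1 -> t2 <= t -> backwards_path P h t0 t x -> backwards_path P h t1 t2 x.
Proof.
  intros H1 H2 [RCx Lx]. split; intros s Hs; [apply RCx | apply Lx]; lra.
Qed.

Lemma jump_at_iff h j c v :
  LL (h j) c v -> (jump_at h j c <-> h j c = (v + 2)%Z).
Proof.
  intros Hv. split.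
  - intros [w [Hw E]]. rewrite (LL_unique _ _ _ _ Hv Hw). exact E.
  - intros E. exists v. auto.
Qed.

Lemma tasep_left_limit P t0 h c : tasep_height P t0 h -> t0 < c ->
  exists hm : Z -> Z, (forall j, LL (h j) c (hm j)) /\
    tasep_update (fun j => P j c) hm (fun j => h j c).
Proof.
  intros Hh Hc. pose proof Hh as [_ [_ T3]].
  destruct (functional_choice (fun j v => LL (h j) c v)) as [hm Hhm].
  { intro j. destruct (T3 j c Hc) as [a [b [_ [_ [Hb _]]]]]. eauto. }
  exists hm. split; [exact Hhm|].
  assert (Rule : forall j,
    (P j c /\ (hm j - hm (j - 1) = -1 /\ hm (j + 1) - hm j = 1)
       /\ h j c = hm j + 2)%Z \/
    (~ (P j c /\ hm j - hm (j - 1) = -1 /\ hm (j + 1) - hm j = 1)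
       /\ h j c = hm j)%Z).
  { intro j. destruct (T3 j c Hc) as [a [b [d [Ha [Hb [Hd Hcase]]]]]].
    rewrite (LL_unique _ _ _ _ (Hhm (j - 1)%Z) Ha), (LL_unique _ _ _ _ (Hhm j) Hb),
      (LL_unique _ _ _ _ (Hhm (j + 1)%Z) Hd).
    destruct Hcase as [[A [B [C D]]] | [N D]]; [left | right]; auto. }
  constructor; intro j.
  - destruct (Rule j) as [[_ E] | [_ E]]; lia.
  - intro E. destruct (Rule j) as [[A [[B C] _]] | [_ D]]; [|lia]. split; [auto | lia].
  - intro N. destruct (Rule j) as [[A _] | [_ D]]; [contradiction | exact D].
  - exact (tasep_height_slope _ _ _ j c Hh ltac:(lra)).
Qed.

Lemma bstep_ok_backward_step P h hm c y ym :
  (forall j, LL (h j) c (hm j)) -> bstep_ok P h c y ym ->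
  backward_step (fun j => P j c) hm (fun j => h j c) y ym.
Proof.
  intros Hhm [stay [jump move]].
  split; [exact stay | split]; intros py E.
  - apply jump; [exact py|]. apply (jump_at_iff _ _ _ _ (Hhm y)). exact E.
  - apply move; [exact py|]. rewrite (jump_at_iff _ _ _ _ (Hhm y)). exact E.
Qed.

Section BackwardsPathComparison.

Variables (P : clocks) (h hs : Z -> R -> Z) (x xl : R -> Z) (t1 t2 : R).
Hypothesis single_ring : forall z z' s, P z s -> P z' s -> z = z'.
Hypothesis h_tasep : tasep_height P t1 h.
Hypothesis hs_tasep : tasep_height P t1 hs.
Hypothesis x_path : backwards_path P h t1 t2 x.
Hypothesis xl_path : leftmost_backwards_path P hs t1 t2 xl.
Hypothesis gap_initial : forall j, (x t1 < j)%Z ->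
  (h j t1 - hs j t1 <= h (x t1) t1 - hs (x t1) t1)%Z.

Let gap (u : R) : Z :=
  ((h (xl u) u - hs (xl u) u) - (h (x u) u - hs (x u) u))%Z.

Lemma gap_right_constant c : t1 <= c < t2 ->
  near_right c (fun u => x u = x c /\ xl u = xl c /\ gap u = gap c).
Proof.
  intros Hc.
  destruct h_tasep as [_ [RCh _]]. destruct hs_tasep as [_ [RChs _]].
  destruct x_path as [RCx _]. destruct xl_path as [[RCxl _] _].
  pose proof (near_right_and _ _ _ (RCx c ltac:(lra)) (RCxl c ltac:(lra))) as Wpaths.
  pose proof (near_right_and _ _ _ (RCh (x c) c ltac:(lra)) (RChs (x c) c ltac:(lra))) as Wx.
  pose proof (near_right_and _ _ _ (RCh (xl c) c ltac:(lra)) (RChs (xl c) c ltac:(lra))) as Wxl.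
  generalize (near_right_and _ _ _ Wpaths (near_right_and _ _ _ Wx Wxl)).
  apply near_right_impl. intros u [[Ex Exl] [[Hx Hsx] [Hxl Hsxl]]].
  split; [exact Ex | split; [exact Exl|]].
  unfold gap. rewrite Ex, Exl. lia.
Qed.

Lemma gap_left_limit c : t1 < c <= t2 ->
  exists xm xlm G, near_left c (fun u => x u = xm /\ xl u = xlm /\ gap u = G) /\
    ((x c < xl c)%Z -> ((xm < xlm)%Z -> (G <= 0)%Z) -> (gap c <= 0)%Z) /\
    ((xm < xlm)%Z -> (G <= 0)%Z -> (x c < xl c)%Z).
Proof.
  intros Hc.
  destruct (tasep_left_limit _ _ _ c h_tasep ltac:(lra)) as [hm [Hhm HU]].
  destruct (tasep_left_limit _ _ _ c hs_tasep ltac:(lra)) as [hsm [Hhsm HsU]].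
  destruct x_path as [_ Lx]. destruct xl_path as [[_ Lxl] Lmost].
  destruct (Lx c ltac:(lra)) as [xm [Hxm Bx]].
  destruct (Lxl c ltac:(lra)) as [xlm [Hxlm Bxl]].
  apply (bstep_ok_backward_step _ _ _ _ _ _ Hhm) in Bx.
  apply (bstep_ok_backward_step _ _ _ _ _ _ Hhsm) in Bxl.
  assert (Lxlm : leftmost_choice (fun j => P j c) hsm (fun j => hs j c) (xl c) xlm).
  { intros py nj E. apply (Lmost c xlm); [lra | exact Hxlm | exact py | | exact E].
    rewrite (jump_at_iff _ _ _ _ (Hhsm (xl c))). exact nj. }
  assert (single : forall j k, P j c -> P k c -> j = k) by eauto.
  exists xm, xlm, ((hm xlm - hsm xlm) - (hm xm - hsm xm))%Z.
  split; [|split].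
  - pose proof (near_left_and _ _ _ Hxm Hxlm) as Wpaths.
    pose proof (near_left_and _ _ _ (Hhm xm) (Hhsm xm)) as Wx.
    pose proof (near_left_and _ _ _ (Hhm xlm) (Hhsm xlm)) as Wxl.
    generalize (near_left_and _ _ _ Wpaths (near_left_and _ _ _ Wx Wxl)).
    apply near_left_impl. intros u [[Ex Exl] [[Hx Hsx] [Hxl Hsxl]]].
    split; [exact Ex | split; [exact Exl|]].
    unfold gap. rewrite Ex, Exl. lia.
  - intros Hlt Hbefore. unfold gap.
    destruct (Z_lt_ge_dec xm xlm) as [Hm | Hm].
    + specialize (Hbefore Hm).
      assert (Dx : (hm xm - hsm xm <= h (x c) c - hs (x c) c)%Z)
        by exact (backward_step_diff_mono _ _ _ _ _ single HU HsU _ _ Bx).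
      assert (Dxl : (hsm xlm - hm xlm <= hs (xl c) c - h (xl c) c)%Z)
        by exact (backward_step_diff_mono _ _ _ _ _ single HsU HU _ _ Bxl).
      lia.
    + assert (Dcross : (h (xl c) c - hs (xl c) c <= h (x c) c - hs (x c) c)%Z)
        by exact (backward_steps_cross_forward _ _ _ _ _ single HU HsU _ _ _ _ Bx Bxl Hlt
                    ltac:(lia)).
      lia.
  - intros Hm HG. destruct (Z_lt_ge_dec (x c) (xl c)) as [Hlt | Hge]; [exact Hlt|].
    pose proof (backward_steps_cross_backward _ _ _ _ _ single HU HsU _ _ _ _ Bx Bxl Lxlm
      ltac:(lia) Hm).
    lia.
Qed.

Lemma gap_invariant u : t1 <= u <= t2 -> (x u < xl u)%Z -> (gap u <= 0)%Z.
Proof.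
  intros Hu.
  apply (real_induction t1 t2 (fun u => (x u < xl u)%Z -> (gap u <= 0)%Z));
    [lra | | | | exact Hu].
  - intros Hlt. apply Z.le_sub_0, gap_initial, Hlt.
  - intros c Hc Ic. generalize (gap_right_constant c Hc).
    apply near_right_impl. intros v [-> [-> ->]]. exact Ic.
  - intros c Hc Ibefore Hlt.
    destruct (gap_left_limit c Hc) as [xm [xlm [G [W [Hforward _]]]]].
    apply Hforward; [exact Hlt|]. intros Hm.
    destruct (near_left_witness c _ t1 ltac:(lra) W) as [v [Hv [Ex [Exl <-]]]].
    apply Ibefore; [lra | congruence].
Qed.

Lemma strict_order_persists tau : t1 <= tau -> (x tau < xl tau)%Z ->
  forall u, tau <= u <= t2 -> (x u < xl u)%Z.
Proof.
  intros Htau Hlt u Hu.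
  apply (real_induction tau t2 (fun u => (x u < xl u)%Z)); [lra | exact Hlt | | | exact Hu].
  - intros c Hc Oc. generalize (gap_right_constant c ltac:(lra)).
    apply near_right_impl. intros v [-> [-> _]]. exact Oc.
  - intros c Hc Obefore.
    destruct (gap_left_limit c ltac:(lra)) as [xm [xlm [G [W [_ Hbackward]]]]].
    destruct (near_left_witness c _ tau ltac:(lra) W) as [v [Hv [Ex [Exl EG]]]].
    assert (Hm : (xm < xlm)%Z) by (rewrite <- Ex, <- Exl; apply Obefore; lra).
    apply Hbackward; [exact Hm|]. rewrite <- EG.
    apply gap_invariant; [lra | congruence].
Qed.

Lemma backwards_path_right_of_leftmost : (xl t2 <= x t2)%Z ->
  forall tau, t1 <= tau <= t2 -> (xl tau <= x tau)%Z.
Proof.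
  intros Hend tau Htau. apply Z.nlt_ge. intros Hlt.
  pose proof (strict_order_persists tau ltac:(lra) Hlt t2 ltac:(lra)). lia.
Qed.

End BackwardsPathComparison.

Theorem proposition2p2 :
  forall (P : clocks), clock_regular P ->
  forall (h : Z -> R -> Z), tasep_height P 0 h ->
  forall (t : R) (x : R -> Z), backwards_path P h 0 t x ->
  forall (t1 t2 : R) (x1 x2 : Z),
    0 <= t1 -> t1 < t2 -> t2 <= t ->
    (x t1 >= x1)%Z -> (x t2 >= x2)%Z ->
  forall (hs : Z -> R -> Z), step_height_at P x1 t1 hs ->
  forall (xl : R -> Z), leftmost_backwards_path P hs t1 t2 xl -> xl t2 = x2 ->
  forall tau : R, t1 <= tau <= t2 -> (x tau >= xl tau)%Z.
Proof.
  intros P [_ [single_ring _]] h Hh t x Hx t1 t2 x1 x2 Ht1 Ht12 Ht2 Hx1 Hx2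
    hs [Hhs Hhs_init] xl Hxl Hxl2 tau Htau.
  pose proof (tasep_height_later _ _ _ h Ht1 Hh) as Hh1.
  apply Z.le_ge.
  apply (backwards_path_right_of_leftmost P h hs x xl t1 t2 single_ring Hh1 Hhs
           (backwards_path_restrict _ _ _ _ _ _ _ Ht1 Ht2 Hx) Hxl); [| lia | exact Htau].
  intros j Hj. rewrite !Hhs_init.
  apply (step_profile_gap_nonincreasing (fun k => h k t1)); [| lia].
  intro k. cbv beta.
  destruct (tasep_height_slope _ _ _ k t1 Hh1 (Rle_refl t1)); lia.
Qed.
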